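(* Let $m,n\in\mathbb{N}$ and let $p_{j,\ell},q_{j,\ell}\in\mathbb{C}$ with $\Re(p_{j,\ell})>0$, $\Re(q_{j,\ell})>0$ for $1\le j\le n$, $1\le\ell\le m$. Then the $n\times n$ matrix \[ \left(\prod_{\ell=1}^{m}B\left(p_{j,\ell}+\overline{p_{k,\ell}},\ q_{j,\ell}+\overline{q_{k,\ell}}\right)\right)_{j,k=1}^{n} \] is positive semidefinite.
   Context: $B(p,q)=\int_{0}^{1}x^{p-1}(1-x)^{q-1}dx$ for $\Re(p),\Re(q)>0$ is Euler's Beta function. A complex matrix $A=(a_{j,k})$ is positive semidefinite if $\sum_{j,k}a_{j,k}z_j\overline{z_k}\ge0$ for all complex $z_j$. *)

From Stdlib Require Import Reals.
From Coquelicot Require Import Coquelicot.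
Open Scope R_scope.

(* complex power x^z := exp(z ln x) for real x > 0 (principal branch) *)
Definition cpow (x : R) (z : C) : C :=
  Cmult (RtoC (exp (Re z * ln x)))
        (cos (Im z * ln x), sin (Im z * ln x)).

Definition Beta (p q : C) : C :=
  RInt_gen (V := C_R_CompleteNormedModule)
    (fun x => Cmult (cpow x (Cminus p 1)) (cpow (1 - x) (Cminus q 1)))
    (at_right 0) (at_left 1).

Fixpoint sumC (f : nat -> C) (n : nat) : C :=
  match n with O => RtoC 0 | S k => Cplus (sumC f k) (f k) end.
Fixpoint prodC (f : nat -> C) (n : nat) : C :=
  match n with O => RtoC 1 | S k => Cmult (prodC f k) (f k) end.

(* An n x n complex matrix A (entries A j k, 0 <= j,k < n) is positive
   semidefinite if sum_{j,k} A j k z_j conj(z_k) >= 0 (a nonnegative real)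
   for all complex z_j. *)
Definition psd (n : nat) (A : nat -> nat -> C) : Prop :=
  forall z : nat -> C,
    let s := sumC (fun j => sumC (fun k => Cmult (Cmult (A j k) (z j)) (Cconj (z k))) n) n in
    Im s = 0 /\ 0 <= Re s.

From Stdlib Require Import Reals Lra Lia.
From Coquelicot Require Import Coquelicot.
Open Scope R_scope.

(** With [g_j(x) = x^(p_j - 1/2) (1 - x)^(q_j - 1/2)] one has
    [B(p_j + conj p_k, q_j + conj q_k) = int_0^1 g_j(x) conj (g_k(x)) dx], so each factor of the
    product is a Gram matrix.  If [A] is positive semidefinite, so is its entrywise product with
    such a Gram matrix [L]: the Hermitian form [sum_jk A_jk L_jk z_j conj z_k] is the integral of
    the nonnegative function [x |-> sum_jk A_jk (z_j g_j(x)) conj (z_k g_k(x))].  The improper integral converges because near each endpoint the integrand is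
    dominated by a power of [x] (resp. [1 - x]) with exponent [> -1], whose primitive has a limit
    there. *)

(** * Elementary real analysis *)

Lemma exp_le_compat (x y : R) : x <= y -> exp x <= exp y.
Proof. intros [H | ->]; [left; now apply exp_increasing | apply Rle_refl]. Qed.

Lemma exp_mul_ln_le_half_one (c y : R) : /2 <= y <= 1 -> exp (c * ln y) <= exp (Rabs c * ln 2).
Proof.
  intros Hy; apply exp_le_compat.
  assert (ln y <= 0) by (rewrite <- ln_1; apply ln_le; lra).
  assert (- ln 2 <= ln y) by (rewrite <- ln_Rinv by lra; apply ln_le; lra).
  destruct (Rcase_abs c); [rewrite Rabs_left | rewrite Rabs_right]; nra.
Qed.

Lemma at_right_lt (a c : R) : a < c -> at_right a (fun u => a < u < c).
Proof.
  intros Hac; exists (mkposreal (c - a) ltac:(lra)); intros y Hy Hay; split; [easy|].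
  apply Rabs_def2 in Hy; unfold minus, plus, opp in Hy; simpl in Hy; lra.
Qed.

Lemma at_left_gt (c b : R) : c < b -> at_left b (fun v => c < v < b).
Proof.
  intros Hcb; exists (mkposreal (b - c) ltac:(lra)); intros y Hy Hyb; split; [|easy].
  apply Rabs_def2 in Hy; unfold minus, plus, opp in Hy; simpl in Hy; lra.
Qed.

Lemma filter_prod_at_right_at_left_le (a b : R) : a < b ->
  filter_prod (at_right a) (at_left b) (fun ab => fst ab <= snd ab).
Proof.
  intros Hab; apply Filter_prod with (fun u => a < u < (a + b) / 2) (fun v => (a + b) / 2 < v < b);
    [apply at_right_lt | apply at_left_gt | intros u v Hu Hv; simpl]; lra.
Qed.

Lemma Rabs_sub_lt_ball (l e x y : R) : ball l e x -> ball l e y -> Rabs (y - x) < 2 * e.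
Proof.
  intros Hx Hy; apply Rabs_def2 in Hx; apply Rabs_def2 in Hy.
  apply Rabs_def1; simpl in *; unfold minus, plus, opp in *; simpl in *; lra.
Qed.

Lemma filterlim_rpow_at_right_0 (c s : R) : 0 < s ->
  filterlim (fun x => c * exp (s * ln x)) (at_right 0) (locally 0).
Proof.
  intros Hs.
  assert (Hexp := is_lim_scal_l (fun y => exp y) c m_infty 0 is_lim_exp_m).
  simpl in Hexp; rewrite Rmult_0_r in Hexp.
  apply (filterlim_comp _ _ _ (fun x => s * ln x) (fun y => c * exp y) _ (Rbar_locally m_infty));
    [|exact Hexp].
  apply (filterlim_comp _ _ _ ln (fun y => s * y) _ (Rbar_locally m_infty) _ is_lim_ln_0).
  intros P [M HM]; exists (M / s); intros y Hy; apply HM.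
  apply (Rmult_lt_compat_l s) in Hy; [|exact Hs].
  now replace (s * (M / s)) with M in Hy by (field; lra).
Qed.

Lemma filterlim_one_minus_at_left_1 : filterlim (fun x => 1 - x) (at_left 1) (at_right 0).
Proof.
  intros P [e HP]; exists e; intros y Hy Hy1; apply HP; [|lra].
  unfold ball in *; simpl in *; unfold AbsRing_ball, abs, minus, plus, opp in *; simpl in *.
  now replace (1 - y + - 0) with (- (y + - 1)) by ring; rewrite Rabs_Ropp.
Qed.

(** * Integrals over an interval *)

Lemma minus_plus_l {G : AbelianGroup} (x y : G) : minus (plus x y) x = y.
Proof.
  unfold minus; rewrite plus_comm, plus_assoc, plus_opp_l.
  apply plus_zero_l.
Qed.

Lemma norm_RInt_le_primitive {V : CompleteNormedModule R_AbsRing} (f : R -> V) (g G : R -> R) u v :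
  ex_RInt f u v ->
  (forall x, Rmin u v <= x <= Rmax u v -> norm (f x) <= g x) ->
  (forall x, Rmin u v <= x <= Rmax u v -> is_derive G x (g x)) ->
  (forall x, Rmin u v <= x <= Rmax u v -> continuous g x) ->
  norm (RInt f u v) <= Rabs (G v - G u).
Proof.
  intros Hf Hb Hd Hc.
  assert (Hg : is_RInt g u v (G v - G u))
    by now apply (is_RInt_derive (V := R_CompleteNormedModule)).
  destruct (Rle_lt_dec u v) as [Huv | Hvu].
  - rewrite Rmin_left, Rmax_right in Hb by lra.
    eapply Rle_trans; [|apply Rle_abs].
    apply (norm_RInt_le f g u v); auto using RInt_correct.
  - rewrite Rmin_right, Rmax_left in Hb by lra.
    rewrite <- opp_RInt_swap by now apply ex_RInt_swap.
    eapply Rle_trans; [right; exact (norm_opp (K := R_AbsRing) (V := V) _)|].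
    rewrite Rabs_minus_sym; eapply Rle_trans; [|apply Rle_abs].
    apply (norm_RInt_le f g v u); auto using RInt_correct, ex_RInt_swap; [lra|].
    replace (G u - G v) with (opp (G v - G u)) by (unfold opp; simpl; ring).
    now apply (is_RInt_swap (V := R_NormedModule)).
Qed.

Lemma ball_RInt_of_ends {V : CompleteNormedModule R_AbsRing} (f : R -> V) (u1 u2 v1 v2 e1 e2 : R) :
  ex_RInt f u1 u2 -> ex_RInt f u2 v2 -> ex_RInt f u1 v1 -> ex_RInt f v1 v2 ->
  norm (RInt f u2 v2) < e2 -> norm (RInt f u1 v1) < e1 ->
  ball (RInt f u1 u2) (e2 + e1) (RInt f v1 v2).
Proof.
  intros H12 H22 H11 H21 He2 He1.
  assert (Hright : plus (RInt f u1 u2) (RInt f u2 v2) = RInt f u1 v2) by now apply RInt_Chasles.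
  assert (Hleft : plus (RInt f v1 v2) (RInt f u1 v1) = RInt f u1 v2)
    by (rewrite plus_comm; now apply RInt_Chasles).
  apply ball_triangle with (RInt f u1 v2); [|apply ball_sym];
    apply (norm_compat1 (K := R_AbsRing) (V := V)).
  - rewrite <- Hright; now rewrite (minus_plus_l (G := NormedModule.AbelianGroup R_AbsRing V)).
  - rewrite <- Hleft; now rewrite (minus_plus_l (G := NormedModule.AbelianGroup R_AbsRing V)).
Qed.

Lemma ex_RInt_gen_of_tail_bounds {V : CompleteNormedModule R_AbsRing} (f : R -> V)
    (a c b : R) (Ga Gb : R -> R) (la lb : R) :
  a < c < b ->
  (forall u v, a < u < b -> a < v < b -> ex_RInt f u v) ->
  (forall u v, a < u <= c -> a < v <= c -> norm (RInt f u v) <= Rabs (Ga v - Ga u)) ->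
  (forall u v, c <= u < b -> c <= v < b -> norm (RInt f u v) <= Rabs (Gb v - Gb u)) ->
  filterlim Ga (at_right a) (locally la) ->
  filterlim Gb (at_left b) (locally lb) ->
  ex_RInt_gen f (at_right a) (at_left b).
Proof.
  intros Hc Hf Ha Hb HGa HGb.
  (* Cauchy criterion: two partial integrals differ by the integrals over the two end pieces. *)
  set (I := fun ab : R * R => RInt f (fst ab) (snd ab)).
  assert (Hcauchy : forall eps : posreal, exists P, filter_prod (at_right a) (at_left b) P /\
            forall u v, P u -> P v -> ball (I u) eps (I v)).
  { intros eps.
    set (e := pos_div_2 (pos_div_2 eps)).
    exists (fun ab => (a < fst ab < c /\ ball la e (Ga (fst ab))) /\
                      (c < snd ab < b /\ ball lb e (Gb (snd ab)))); split.
    { apply Filter_prod with (fun u => a < u < c /\ ball la e (Ga u))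
        (fun v => c < v < b /\ ball lb e (Gb v)); [| |easy].
      - apply filter_and; [now apply at_right_lt | now apply HGa, locally_ball].
      - apply filter_and; [now apply at_left_gt | now apply HGb, locally_ball]. }
    intros [u1 u2] [v1 v2] [[Hu1 HGu1] [Hu2 HGu2]] [[Hv1 HGv1] [Hv2 HGv2]]; unfold I; simpl in *.
    replace (pos eps) with (2 * e + 2 * e) by (simpl; field).
    apply ball_RInt_of_ends; try (apply Hf; lra).
    - eapply Rle_lt_trans; [apply Hb; lra | now apply Rabs_sub_lt_ball with lb].
    - eapply Rle_lt_trans; [apply Ha; lra | now apply Rabs_sub_lt_ball with la]. }
  destruct (proj1 (filterlim_locally_cauchy I) Hcauchy) as [l Hl].
  exists l; apply (filterlimi_lim_ext_loc I); [|exact Hl].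
  apply Filter_prod with (fun u => a < u < c) (fun v => c < v < b);
    [now apply at_right_lt | now apply at_left_gt |].
  intros u v Hu Hv; apply RInt_correct, Hf; simpl; lra.
Qed.

Lemma norm_C_R (x : C) : @norm R_AbsRing C_R_NormedModule x = Cmod x.
Proof. rewrite Cmod_norm. reflexivity. Qed.

Lemma is_RInt_Cmult (c : C) (f : R -> C) a b l :
  is_RInt (V := C_R_NormedModule) f a b l ->
  is_RInt (V := C_R_NormedModule) (fun x => c * f x)%C a b (c * l)%C.
Proof.
  intros Hf.
  assert (H1 := is_RInt_fct_extend_fst (U := R_NormedModule) (V := R_NormedModule) f a b l Hf).
  assert (H2 := is_RInt_fct_extend_snd (U := R_NormedModule) (V := R_NormedModule) f a b l Hf).
  apply (is_RInt_fct_extend_pair (U := R_NormedModule) (V := R_NormedModule)); simpl.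
  - apply (is_RInt_minus (V := R_NormedModule)); now apply (is_RInt_scal (V := R_NormedModule)).
  - apply (is_RInt_plus (V := R_NormedModule)); now apply (is_RInt_scal (V := R_NormedModule)).
Qed.


Lemma is_linear_Cmult (c : C) : is_linear (U := C_R_NormedModule) (V := C_R_NormedModule) (Cmult c).
Proof.
  apply Build_is_linear.
  - intros x y; apply Cmult_plus_distr_l.
  - intros k x; apply injective_projections; simpl; unfold scal; simpl; unfold mult; simpl; ring.
  - exists (Cmod c + 1); split; [generalize (Cmod_ge_0 c); lra|].
    intros x; rewrite !norm_C_R, Cmod_mult.
    generalize (Cmod_ge_0 x); nra.
Qed.


Section ImproperIntegrals.

Context {Fa Fb : (R -> Prop) -> Prop} {FFa : Filter Fa} {FFb : Filter Fb}.

Lemma is_RInt_gen_comp_continuous {U V : NormedModule R_AbsRing} (T : U -> V)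
    (f : R -> U) (h : R -> V) (l : U) :
  (forall a b y, is_RInt f a b y -> is_RInt h a b (T y)) -> continuous T l ->
  is_RInt_gen f Fa Fb l -> is_RInt_gen h Fa Fb (T l).
Proof.
  intros HT Tcont Hf P HP; unfold filtermapi.
  apply (filter_imp (fun ab => exists y, is_RInt f (fst ab) (snd ab) y /\ P (T y))).
  - intros ab [y [Hy HPy]]; exists (T y); auto.
  - exact (Hf _ (Tcont P HP)).
Qed.

Lemma is_RInt_gen_Cmult (c : C) (f : R -> C) (l : C) :
  is_RInt_gen (V := C_R_NormedModule) f Fa Fb l ->
  is_RInt_gen (V := C_R_NormedModule) (fun x => c * f x)%C Fa Fb (c * l)%C.
Proof.
  apply (is_RInt_gen_comp_continuous (Cmult c)).
  - intros a b y; apply is_RInt_Cmult.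
  - apply linear_cont, is_linear_Cmult.
Qed.

Lemma is_RInt_gen_Re (f : R -> C) (l : C) :
  is_RInt_gen (V := C_R_NormedModule) f Fa Fb l ->
  is_RInt_gen (fun x => Re (f x)) Fa Fb (Re l).
Proof.
  apply (is_RInt_gen_comp_continuous (V := R_NormedModule) Re).
  - exact (is_RInt_fct_extend_fst (U := R_NormedModule) (V := R_NormedModule) f).
  - apply linear_cont, (is_linear_fst (U := R_NormedModule) (V := R_NormedModule)).
Qed.

Lemma is_RInt_gen_zero :
  is_RInt_gen (V := C_R_NormedModule) (fun _ => RtoC 0) Fa Fb (RtoC 0).
Proof.
  apply (filterlimi_lim_ext (fun _ => RtoC 0)); [|apply filterlim_const].
  intros ab.
  assert (H0 := is_RInt_const (V := C_R_NormedModule) (fst ab) (snd ab) (RtoC 0)).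
  rewrite (scal_zero_r (V := C_R_NormedModule)) in H0.
  exact H0.
Qed.

Lemma is_RInt_gen_sumC (N : nat) (f : nat -> R -> C) (l : nat -> C) :
  (forall j, (j < N)%nat -> is_RInt_gen (V := C_R_NormedModule) (f j) Fa Fb (l j)) ->
  is_RInt_gen (V := C_R_NormedModule) (fun x => sumC (fun j => f j x) N) Fa Fb (sumC l N).
Proof.
  induction N as [|N IH]; intros Hf; simpl.
  - exact is_RInt_gen_zero.
  - apply (is_RInt_gen_plus (V := C_R_NormedModule) (fun x => sumC (fun j => f j x) N) (f N)).
    + apply IH; intros j Hj; apply Hf; lia.
    + apply Hf; lia.
Qed.

End ImproperIntegrals.

Definition nonnegC (w : C) : Prop := Im w = 0 /\ 0 <= Re w.

Lemma nonnegC_of_Cmod_le_Re (w : C) : Cmod w <= Re w -> nonnegC w.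
Proof.
  destruct w as [x y]; unfold nonnegC, Cmod, Re, Im; cbn [fst snd]; intros Hw.
  assert (Hs := sqrt_pos (x ^ 2 + y ^ 2)).
  assert (Hss := sqrt_sqrt (x ^ 2 + y ^ 2) ltac:(nra)).
  assert (y * y <= 0) by nra.
  split; nra.
Qed.

Lemma Cmod_nonnegC (w : C) : nonnegC w -> Cmod w = Re w.
Proof.
  destruct w as [x y]; unfold nonnegC, Cmod, Re, Im; simpl; intros [-> Hx].
  rewrite Rmult_0_l, Rplus_0_r, Rmult_1_r; apply sqrt_square, Hx.
Qed.

Lemma nonnegC_mul_conj (w : C) : nonnegC (w * Cconj w)%C.
Proof. destruct w as [x y]; unfold nonnegC, Re, Im; simpl; split; nra. Qed.

Lemma is_RInt_gen_nonnegC {Fa Fb : (R -> Prop) -> Prop} {FFa : ProperFilter Fa}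
    {FFb : ProperFilter Fb} (h : R -> C) (l : C) :
  filter_prod Fa Fb (fun ab => fst ab <= snd ab) ->
  (forall x, nonnegC (h x)) ->
  is_RInt_gen (V := C_R_NormedModule) h Fa Fb l -> nonnegC l.
Proof.
  (* [|l| <= int |h| = int Re h = Re l] *)
  intros Hord Hh Hl; apply nonnegC_of_Cmod_le_Re; rewrite <- norm_C_R.
  apply (RInt_gen_norm (V := C_R_CompleteNormedModule) h (fun x => Re (h x)) l (Re l) Hord).
  - apply filter_forall; intros ab x _; rewrite norm_C_R, Cmod_nonnegC; [apply Rle_refl | apply Hh].
  - exact Hl.
  - now apply is_RInt_gen_Re.
Qed.

(** * Complex powers and the Beta integral *)

Lemma cpowE x z : cpow x z =
  (exp (Re z * ln x) * cos (Im z * ln x), exp (Re z * ln x) * sin (Im z * ln x)).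
Proof. apply injective_projections; simpl; ring. Qed.

Lemma cpowD x a b : cpow x (a + b)%C = (cpow x a * cpow x b)%C.
Proof.
  rewrite !cpowE; unfold Re, Im; simpl.
  rewrite !Rmult_plus_distr_r, exp_plus, cos_plus, sin_plus.
  apply injective_projections; simpl; ring.
Qed.

Lemma cpow_conj x a : Cconj (cpow x a) = cpow x (Cconj a).
Proof.
  rewrite !cpowE; unfold Re, Im; simpl.
  rewrite Ropp_mult_distr_l_reverse, cos_neg, sin_neg.
  apply injective_projections; simpl; ring.
Qed.

Lemma Cmod_cpow x a : Cmod (cpow x a) = exp (Re a * ln x).
Proof.
  unfold cpow; rewrite Cmod_mult, Cmod_R, Rabs_pos_eq by (left; apply exp_pos).
  unfold Cmod; simpl; rewrite !Rmult_1_r.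
  change (?c * ?c) with (Rsqr c); rewrite Rplus_comm, sin2_cos2, sqrt_1.
  apply Rmult_1_r.
Qed.

Definition beta_kernel (a b : C) (x : R) : C := (cpow x a * cpow (1 - x) b)%C.

Lemma ex_RInt_beta_kernel a b u v : 0 < u < 1 -> 0 < v < 1 ->
  ex_RInt (V := C_R_CompleteNormedModule) (beta_kernel a b) u v.
Proof.
  intros Hu Hv.
  assert (Hmin : 0 < Rmin u v) by now apply Rmin_glb_lt.
  assert (Hmax : Rmax u v < 1) by now apply Rmax_lub_lt.
  assert (Hcont : forall t, Rmin u v <= t <= Rmax u v ->
    continuous (fun x => fst (beta_kernel a b x)) t /\
    continuous (fun x => snd (beta_kernel a b x)) t).
  { intros t Ht; unfold beta_kernel, cpow; simpl.
    split; apply (ex_derive_continuous (V := R_NormedModule)); auto_derive; lra. }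
  destruct (ex_RInt_continuous (V := R_CompleteNormedModule) (fun x => fst (beta_kernel a b x)) u v)
    as [l1 H1]; [apply Hcont|].
  destruct (ex_RInt_continuous (V := R_CompleteNormedModule) (fun x => snd (beta_kernel a b x)) u v)
    as [l2 H2]; [apply Hcont|].
  exists (l1, l2).
  now apply (is_RInt_fct_extend_pair (U := R_NormedModule) (V := R_NormedModule)).
Qed.

Lemma Cmod_beta_kernel a b x :
  Cmod (beta_kernel a b x) = exp (Re a * ln x) * exp (Re b * ln (1 - x)).
Proof. unfold beta_kernel; now rewrite Cmod_mult, !Cmod_cpow. Qed.

Lemma norm_RInt_beta_kernel_near_0 (p q : C) (u v : R) :
  0 < Re p -> 0 < u <= /2 -> 0 < v <= /2 ->
  let G x := exp (Rabs (Re q - 1) * ln 2) / Re p * exp (Re p * ln x) in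
  norm (RInt (V := C_R_CompleteNormedModule) (beta_kernel (p - 1) (q - 1)) u v)
    <= Rabs (G v - G u).
Proof.
  intros Hp Hu Hv G.
  set (K := exp (Rabs (Re q - 1) * ln 2)).
  assert (Hmin : 0 < Rmin u v) by now apply Rmin_glb_lt.
  assert (Hmax : Rmax u v <= /2) by now apply Rmax_lub.
  apply (norm_RInt_le_primitive _ (fun x => K * exp ((Re p - 1) * ln x))).
  - apply ex_RInt_beta_kernel; lra.
  - intros x Hx; rewrite norm_C_R, Cmod_beta_kernel, (Rmult_comm K).
    apply Rmult_le_compat_l; [left; apply exp_pos|].
    apply exp_mul_ln_le_half_one; lra.
  - intros x Hx; unfold G; auto_derive; [lra|].
    replace ((Re p - 1) * ln x) with (Re p * ln x + - ln x) by ring.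
    rewrite exp_plus, exp_Ropp, exp_ln by lra; unfold K; field; split; lra.
  - intros x Hx; apply (ex_derive_continuous (V := R_NormedModule)); auto_derive; lra.
Qed.

Lemma norm_RInt_beta_kernel_near_1 (p q : C) (u v : R) :
  0 < Re q -> /2 <= u < 1 -> /2 <= v < 1 ->
  let G x := - exp (Rabs (Re p - 1) * ln 2) / Re q * exp (Re q * ln (1 - x)) in
  norm (RInt (V := C_R_CompleteNormedModule) (beta_kernel (p - 1) (q - 1)) u v)
    <= Rabs (G v - G u).
Proof.
  intros Hq Hu Hv G.
  set (K := exp (Rabs (Re p - 1) * ln 2)).
  assert (Hmin : /2 <= Rmin u v) by now apply Rmin_glb.
  assert (Hmax : Rmax u v < 1) by now apply Rmax_lub_lt.
  apply (norm_RInt_le_primitive _ (fun x => K * exp ((Re q - 1) * ln (1 - x)))).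
  - apply ex_RInt_beta_kernel; lra.
  - intros x Hx; rewrite norm_C_R, Cmod_beta_kernel.
    apply Rmult_le_compat_r; [left; apply exp_pos|].
    apply exp_mul_ln_le_half_one; lra.
  - intros x Hx; unfold G; auto_derive; [lra|].
    replace ((Re q - 1) * ln (1 - x)) with (Re q * ln (1 - x) + - ln (1 - x)) by ring.
    replace (1 + - x) with (1 - x) by ring.
    rewrite exp_plus, exp_Ropp, exp_ln by lra; unfold K; field; split; lra.
  - intros x Hx; apply (ex_derive_continuous (V := R_NormedModule)); auto_derive; lra.
Qed.

Lemma ex_RInt_gen_beta_kernel (p q : C) : 0 < Re p -> 0 < Re q ->
  ex_RInt_gen (V := C_R_CompleteNormedModule) (beta_kernel (p - 1) (q - 1))
    (at_right 0) (at_left 1).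
Proof.
  intros Hp Hq.
  apply (ex_RInt_gen_of_tail_bounds _ 0 (/2) 1 _ _ 0 0 ltac:(lra)
    (fun u v Hu Hv => ex_RInt_beta_kernel _ _ u v Hu Hv)
    (fun u v Hu Hv => norm_RInt_beta_kernel_near_0 p q u v Hp Hu Hv)
    (fun u v Hu Hv => norm_RInt_beta_kernel_near_1 p q u v Hq Hu Hv)).
  - now apply filterlim_rpow_at_right_0.
  - apply (filterlim_comp _ _ _ (fun x => 1 - x) (fun y => _ * exp (Re q * ln y)) _ (at_right 0)).
    + exact filterlim_one_minus_at_left_1.
    + now apply filterlim_rpow_at_right_0.
Qed.

Lemma is_RInt_gen_Beta (p q : C) : 0 < Re p -> 0 < Re q ->
  is_RInt_gen (V := C_R_NormedModule) (beta_kernel (p - 1) (q - 1))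
    (at_right 0) (at_left 1) (Beta p q).
Proof.
  intros Hp Hq; apply (RInt_gen_correct (V := C_R_CompleteNormedModule)).
  now apply ex_RInt_gen_beta_kernel.
Qed.

Lemma beta_kernel_conj_split (pj pk qj qk : C) (x : R) :
  beta_kernel (pj + Cconj pk - 1) (qj + Cconj qk - 1) x
  = (beta_kernel (pj - RtoC (/2)) (qj - RtoC (/2)) x
     * Cconj (beta_kernel (pk - RtoC (/2)) (qk - RtoC (/2)) x))%C.
Proof.
  assert (Hsplit : forall a b : C, (a + Cconj b - 1 = (a - RtoC (/2)) + Cconj (b - RtoC (/2)))%C)
    by (intros; apply injective_projections; simpl; field).
  unfold beta_kernel; rewrite !Hsplit, !cpowD, Cmult_conj, <- !cpow_conj; ring.
Qed.

Lemma is_RInt_gen_Beta_gram (pj pk qj qk : C) :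
  0 < Re pj -> 0 < Re pk -> 0 < Re qj -> 0 < Re qk ->
  is_RInt_gen (V := C_R_NormedModule)
    (fun x => beta_kernel (pj - RtoC (/2)) (qj - RtoC (/2)) x
              * Cconj (beta_kernel (pk - RtoC (/2)) (qk - RtoC (/2)) x))%C
    (at_right 0) (at_left 1) (Beta (pj + Cconj pk) (qj + Cconj qk)).
Proof.
  intros Hpj Hpk Hqj Hqk.
  apply (is_RInt_gen_ext (beta_kernel (pj + Cconj pk - 1) (qj + Cconj qk - 1))).
  - apply filter_forall; intros ab x _; apply beta_kernel_conj_split.
  - apply is_RInt_gen_Beta; unfold Re in *; simpl; lra.
Qed.

(** * Hermitian forms *)

Lemma sumC_ext (f g : nat -> C) (N : nat) :
  (forall j, (j < N)%nat -> f j = g j) -> sumC f N = sumC g N.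
Proof.
  induction N as [|N IH]; intros Hfg; simpl; [reflexivity|].
  rewrite IH, Hfg; [reflexivity | lia | intros j Hj; apply Hfg; lia].
Qed.

Lemma sumC_Cmult_l (c : C) (f : nat -> C) (N : nat) :
  sumC (fun k => c * f k)%C N = (c * sumC f N)%C.
Proof.
  induction N as [|N IH]; simpl; [apply injective_projections; simpl; ring|].
  rewrite IH; ring.
Qed.

Lemma sumC_conj (f : nat -> C) (N : nat) : Cconj (sumC f N) = sumC (fun k => Cconj (f k)) N.
Proof.
  induction N as [|N IH]; simpl; [apply injective_projections; simpl; ring|].
  now rewrite Cplus_conj, IH.
Qed.

Definition qform (n : nat) (A : nat -> nat -> C) (z : nat -> C) : C :=
  sumC (fun j => sumC (fun k => A j k * z j * Cconj (z k))%C n) n.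

Lemma psdE (n : nat) (A : nat -> nat -> C) : psd n A <-> forall z, nonnegC (qform n A z).
Proof. reflexivity. Qed.

Lemma psd_one (n : nat) : psd n (fun _ _ => RtoC 1).
Proof.
  apply psdE; intros z.
  replace (qform n (fun _ _ => RtoC 1) z) with (sumC z n * Cconj (sumC z n))%C;
    [apply nonnegC_mul_conj|].
  rewrite sumC_conj, Cmult_comm, <- sumC_Cmult_l.
  apply sumC_ext; intros j _.
  rewrite Cmult_comm, <- sumC_Cmult_l.
  apply sumC_ext; intros k _; ring.
Qed.

Lemma psd_mul_gram {Fa Fb : (R -> Prop) -> Prop} {FFa : ProperFilter Fa} {FFb : ProperFilter Fb}
    (n : nat) (A L : nat -> nat -> C) (g : nat -> R -> C) :
  filter_prod Fa Fb (fun ab => fst ab <= snd ab) ->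
  psd n A ->
  (forall j k, (j < n)%nat -> (k < n)%nat ->
     is_RInt_gen (V := C_R_NormedModule) (fun x => g j x * Cconj (g k x))%C Fa Fb (L j k)) ->
  psd n (fun j k => A j k * L j k)%C.
Proof.
  intros Hord HA HL; apply psdE; intros z.
  set (c j k := (A j k * z j * Cconj (z k))%C).
  apply (is_RInt_gen_nonnegC (fun x => qform n A (fun j => z j * g j x)%C) _ Hord);
    [intros x; apply HA|].
  replace (qform n _ z) with (sumC (fun j => sumC (fun k => c j k * L j k)%C n) n)
    by (apply sumC_ext; intros j _; apply sumC_ext; intros k _; unfold c; ring).
  apply (is_RInt_gen_ext (fun x => sumC (fun j => sumC (fun k =>
           c j k * (g j x * Cconj (g k x)))%C n) n)).
  - apply filter_forall; intros ab x _.
    apply sumC_ext; intros j _; apply sumC_ext; intros k _.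
    unfold c; rewrite Cmult_conj; ring.
  - apply is_RInt_gen_sumC; intros j Hj; apply is_RInt_gen_sumC; intros k Hk.
    now apply is_RInt_gen_Cmult, HL.
Qed.

Theorem mainTheorem6 (m n : nat) (p q : nat -> nat -> C) :
  (forall j l, (j < n)%nat -> (l < m)%nat -> 0 < Re (p j l) /\ 0 < Re (q j l)) ->
  psd n (fun j k =>
    prodC (fun l => Beta (Cplus (p j l) (Cconj (p k l)))
                         (Cplus (q j l) (Cconj (q k l)))) m).
Proof.
  induction m as [|m IH]; intros Hpq; simpl; [apply psd_one|].
  apply (psd_mul_gram _ _ _
    (fun j => beta_kernel (p j m - RtoC (/2)) (q j m - RtoC (/2)))
    (filter_prod_at_right_at_left_le 0 1 Rlt_0_1)).
  - apply IH; intros j l Hj Hl; apply Hpq; lia.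
  - intros j k Hj Hk.
    destruct (Hpq j m Hj (Nat.lt_succ_diag_r m)), (Hpq k m Hk (Nat.lt_succ_diag_r m)).
    now apply is_RInt_gen_Beta_gram.
Qed.
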